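(* Let $G$ be a finite group and $O=C_1\sqcup\dots\sqcup C_m$ a disjoint union of conjugacy classes of $G$, none equal to $\{1\}$, such that the elements of each class $C_i$ generate $G$. Then the power series $\chi_{(G,O)}(t_1,\dots,t_m)=\sum_{\bar k\in\mathbb Z_{\ge0}^m}h_{\bar k}t_1^{k_1}\cdots t_m^{k_m}$ is a rational function, where $h_{\bar k}$ is the number of elements $s\in S(G,O)^G_{\mathbf 1}$ with $\tau(s)=\bar k$.
   Context: The factorization semigroup $S(G,O)$ is generated by symbols $x_g$, $g\in O$, subject to $x_{g_1}x_{g_2}=x_{g_2}x_{g_2^{-1}g_1g_2}=x_{g_1g_2g_1^{-1}}x_{g_1}$ ($g_1,g_2\in O$); $\alpha_G:S(G,O)\to G$, $x_g\mapsto g$. For $s=x_{g_1}\cdots x_{g_n}$, $G_s$ is the subgroup generated by $g_1,\dots,g_n$ (well defined). $S(G,O)^G_{\mathbf 1}=\{s:G_s=G,\ \alpha_G(s)=1\}$. The type is $\tau(s)=(\tau_1(s),\dots,\tau_m(s))$, where $\tau_i(s)$ is the number of factors $x_g$ of $s$ with $g\in C_i$. *)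

From mathcomp Require Import all_boot all_order all_algebra all_fingroup.
From mathcomp.multinomials Require Import mpoly.
Set Implicit Arguments. Unset Strict Implicit. Unset Printing Implicit Defensive.
Import GRing.Theory.

(* Words of length n over gT; a word x_{g_1}...x_{g_n} is the tuple (g_1,...,g_n). *)
Section Hurwitz.
Variable gT : finGroupType.
Variable n : nat.

(* One elementary move of the defining relation at positions i, i+1:
   (a, b) |-> (b, b^-1 a b)   (note: a ^ b = b^-1 * a * b in mathcomp). *)
Definition hmove (s t : n.-tuple gT) : bool :=
  [exists i : 'I_n,
     (i.+1 < n) &&
     [forall j : 'I_n,
        if j == i :> nat then tnth t j == nth 1%g s i.+1
        else if j == i.+1 :> nat then tnth t j == (nth 1%g s i ^ nth 1%g s i.+1)%g
        else tnth t j == tnth s j]].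

Definition hequiv : rel (n.-tuple gT) := connect (fun s t => hmove s t || hmove t s).

End Hurwitz.

(* h_k: number of elements s of S(G,O)^G_1 with type k, where O = \bigcup_i C i.
   Elements of S(G,O) of length n = sum_i k_i are equivalence classes of words
   with letters in O under hequiv. *)
Definition hcount (gT : finGroupType) (G : {group gT}) (m : nat)
    (C : 'I_m -> {set gT}) (k : 'X_{1..m}) : nat :=
  let n := mdeg k in
  let O := \bigcup_(i < m) C i in
  #|[set [set u | hequiv t u] |
       t in [set t : n.-tuple gT |
               [&& all (fun g => g \in O) t,
                   <<[set g in t]>>%g == G :> {set gT},
                   (\prod_(g <- t) g)%g == 1%g &
                   [forall i : 'I_m, count (fun g => g \in C i) t == k i]]]]|.

(* A power series F (given by its coefficients) in m variables with rational
   coefficients is a rational function: Q * F = P for polynomials P, Q with Q <> 0. *)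
Definition rational_series (m : nat) (F : 'X_{1..m} -> rat) : Prop :=
  exists P Q : {mpoly rat[m]}, (Q != 0)%R /\
    forall k : 'X_{1..m},
      (\sum_(e <- msupp Q | (e <= k)%MM) Q@_e * F (k - e)%MM = P@_k)%R.

From Stdlib Require Import Classical.
From mathcomp Require Import all_boot all_order all_algebra all_fingroup cyclic.
From mathcomp Require Import zify.
From mathcomp.multinomials Require Import mpoly.
Set Implicit Arguments. Unset Strict Implicit. Unset Printing Implicit Defensive.

(* A word of product 1 is Hurwitz-equivalent to each of its conjugates by an element of the group
   generated by its letters.  Hence, when k_j >= |G|^2, some letter g of C_j occurs more than |G|
   times in a word counted by h_k + |G| e_j; gathering |G| copies of g in front and conjugating g
   to a fixed g0 of C_j gives g0^|G| followed by a word counted by h_k, so that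
   h(k + |G| e_j) <= h(k).  A function N^m -> N that decreases along these shifts is, by Dickson's
   lemma, eventually |G|-periodic in each coordinate, and then multiplying the series by
   prod_j (1 - t_j^|G|) leaves a polynomial. *)

Section HurwitzMoves.
Local Open Scope group_scope.
Variable gT : finGroupType.
Implicit Types (s t w p q : seq gT) (a b g h : gT).

Definition hstep s t := exists p a b q,
  s = p ++ a :: b :: q /\ t = p ++ b :: a ^ b :: q.

Inductive hurwitz : seq gT -> seq gT -> Prop :=
| hurwitz_refl s : hurwitz s s
| hurwitz_step s t : hstep s t -> hurwitz s t
| hurwitz_sym s t : hurwitz s t -> hurwitz t s
| hurwitz_trans s t w : hurwitz s t -> hurwitz t w -> hurwitz s w.

Lemma hurwitz_swap p a b q : hurwitz (p ++ a :: b :: q) (p ++ b :: a ^ b :: q).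
Proof. by apply: hurwitz_step; exists p, a, b, q. Qed.

Lemma hurwitz_cat p q s t : hurwitz s t -> hurwitz (p ++ s ++ q) (p ++ t ++ q).
Proof.
elim=> {s t} [s|s t [p' [a [b [q' [-> ->]]]]]|s t _|s t w _ IH1 _ IH2].
- exact: hurwitz_refl.
- by rewrite -!catA /= !catA; apply: hurwitz_swap.
- exact: hurwitz_sym.
- exact: hurwitz_trans IH1 IH2.
Qed.

Lemma hurwitz_catl p s t : hurwitz s t -> hurwitz (p ++ s) (p ++ t).
Proof. by move=> /(hurwitz_cat p [::]); rewrite !cats0. Qed.

Lemma hurwitz_cons a s t : hurwitz s t -> hurwitz (a :: s) (a :: t).
Proof. exact: (hurwitz_catl [:: a]). Qed.

Lemma hurwitz_invariant (X : Type) (f : seq gT -> X) :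
    (forall p a b q, f (p ++ a :: b :: q) = f (p ++ b :: a ^ b :: q)) ->
  forall s t, hurwitz s t -> f s = f t.
Proof.
move=> f_step s t; elim=> {s t} [//|s t [p [a [b [q [-> ->]]]]]|//|s t w _ -> //].
exact: f_step.
Qed.

Definition wprod s := \prod_(g <- s) g.

Lemma wprod_hurwitz s t : hurwitz s t -> wprod s = wprod t.
Proof.
apply: hurwitz_invariant => p a b q; rewrite /wprod !big_cat !big_cons /=.
by rewrite conjgE !mulgA mulgK.
Qed.

Lemma wprod_nseq n g : wprod (nseq n g) = g ^+ n.
Proof. by elim: n => [|n IH]; rewrite /wprod ?big_nil // big_cons -/(wprod _) IH expgS. Qed.

Lemma size_hurwitz s t : hurwitz s t -> size s = size t.
Proof. by apply: hurwitz_invariant => p a b q; rewrite !size_cat. Qed.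

Lemma gen_hurwitz s t : hurwitz s t -> <<[set x in s]>> = <<[set x in t]>>.
Proof.
apply: (@hurwitz_invariant _ (fun s => <<[set x in s]>>)) => p a b q.
set A := <<_>>; set B := <<_>>.
have inA x : x \in p ++ a :: b :: q -> x \in A by move=> hx; apply: mem_gen; rewrite inE.
have inB x : x \in p ++ b :: a ^ b :: q -> x \in B by move=> hx; apply: mem_gen; rewrite inE.
apply/eqP; rewrite eqEsubset !gen_subG; apply/andP; split; apply/subsetP => x;
  rewrite inE !(mem_cat, in_cons) => /or4P[hx|/eqP->|/eqP->|hx].
- by apply: inB; rewrite mem_cat hx.
- rewrite -[X in X \in _](conjgK b); apply: groupJ; rewrite ?groupV; apply: inB;
    by rewrite mem_cat !in_cons eqxx !orbT.
- by apply: inB; rewrite mem_cat !in_cons eqxx !orbT.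
- by apply: inB; rewrite mem_cat !in_cons hx !orbT.
- by apply: inA; rewrite mem_cat hx.
- by apply: inA; rewrite mem_cat !in_cons eqxx !orbT.
- by apply: groupJ; apply: inA; rewrite mem_cat !in_cons eqxx !orbT.
- by apply: inA; rewrite mem_cat !in_cons hx !orbT.
Qed.

Lemma hurwitz_move_left w b r :
  hurwitz (w ++ b :: r) (b :: map (conjg^~ b) w ++ r).
Proof.
elim: w => [|x w IH] /=; first exact: hurwitz_refl.
exact: hurwitz_trans (hurwitz_cons x IH) (hurwitz_swap [::] x b _).
Qed.

Lemma hurwitz_move_right a w r :
  hurwitz (a :: w ++ r) (w ++ a ^ wprod w :: r).
Proof.
elim: w a => [|x w IH] a /=.
  by rewrite /wprod big_nil conjg1; apply: hurwitz_refl.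
apply: hurwitz_trans (hurwitz_swap [::] a x _) _ => /=.
by rewrite /wprod big_cons conjgM; apply: hurwitz_cons.
Qed.

Lemma hurwitz_collect g s n : n <= count_mem g s ->
  exists s', hurwitz s (nseq n g ++ s').
Proof.
elim: s n => [|x s IH] n /=.
  by rewrite leqn0 => /eqP ->; exists [::]; apply: hurwitz_refl.
have [->|ne_xg] := eqVneq x g.
  case: n => [|n] le_n; first by exists (g :: s); apply: hurwitz_refl.
  by have [s' Hs'] := IH n le_n; exists s'; apply: hurwitz_cons.
move=> /IH[s' Hs']; exists (x ^ wprod (nseq n g) :: s').
exact: hurwitz_trans (hurwitz_cons x Hs') (hurwitz_move_right _ _ _).
Qed.

Lemma hurwitz_rot1 a w : wprod (a :: w) = 1 -> hurwitz (a :: w) (w ++ [:: a]).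
Proof.
rewrite /wprod big_cons => /eqP; rewrite mulg_eq1 => /eqP a_eq.
have := hurwitz_move_right a w [::]; rewrite !cats0.
have -> : wprod w = a^-1 by rewrite a_eq invgK.
by rewrite conjgE invgK mulgV mulg1.
Qed.

Lemma hurwitz_rot u v : wprod (u ++ v) = 1 -> hurwitz (u ++ v) (v ++ u).
Proof.
elim: u v => [|x u IH] v /= prod1; first by rewrite cats0; apply: hurwitz_refl.
have rot1 := hurwitz_rot1 prod1; have prod1' := wprod_hurwitz rot1.
apply: hurwitz_trans rot1 _.
rewrite -catA (_ : v ++ x :: u = (v ++ [:: x]) ++ u); last by rewrite -catA.
by apply: IH; rewrite catA -prod1'.
Qed.

Lemma conjgg a : a ^ a = a.
Proof. by rewrite conjgE mulKg. Qed.

Lemma map_conjgM s g h : map (conjg^~ h) (map (conjg^~ g) s) = map (conjg^~ (g * h)) s.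
Proof. by rewrite -map_comp; apply: eq_map => x /=; rewrite conjgM. Qed.

Lemma hurwitz_conj_last w b : wprod (w ++ [:: b]) = 1 ->
  hurwitz (w ++ [:: b]) (map (conjg^~ b) (w ++ [:: b])).
Proof.
move=> prod1; have move_b := hurwitz_move_left w b [::]; rewrite cats0 in move_b.
rewrite map_cat /= conjgg; apply: (hurwitz_trans move_b).
by apply: hurwitz_rot1; rewrite -(wprod_hurwitz move_b).
Qed.

(* Rotate [a] to the end, conjugate by it there, and rotate back. *)
Lemma hurwitz_conj_mem s a : wprod s = 1 -> a \in s -> hurwitz s (map (conjg^~ a) s).
Proof.
move=> prod1 a_in; case/splitPr: a_in prod1 => p q; rewrite -cat_rcons -cats1 => prod1.
have rot := hurwitz_rot prod1; rewrite catA in rot.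
have conj := hurwitz_conj_last (etrans (esym (wprod_hurwitz rot)) prod1).
have prod1' := etrans (esym (wprod_hurwitz (hurwitz_trans rot conj))) prod1.
apply: hurwitz_trans rot (hurwitz_trans conj _).
rewrite -[(q ++ p) ++ _]catA (map_cat _ q) (map_cat _ (p ++ _)).
by apply: hurwitz_rot; rewrite -map_cat catA.
Qed.

Lemma hurwitz_conj s h : wprod s = 1 -> h \in <<[set x in s]>> ->
  hurwitz s (map (conjg^~ h) s).
Proof.
move=> prod1 /gen_prodgP[n [c c_in ->]].
elim: n c c_in => [|n IH] c c_in.
  by rewrite big_ord0 (eq_map (@conjg1 _)) map_id; apply: hurwitz_refl.
rewrite big_ord_recl; set h0 := \prod_(i < n) _.
have conj_h0 := IH _ (fun i => c_in (lift ord0 i)); rewrite -/h0 in conj_h0.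
have a_in : c ord0 \in s by have := c_in ord0; rewrite inE.
have prod1' : wprod (map (conjg^~ h0) s) = 1 by rewrite -(wprod_hurwitz conj_h0).
have conj_a := hurwitz_conj_mem prod1' (map_f (conjg^~ h0) a_in).
apply: hurwitz_trans conj_h0 (hurwitz_trans conj_a _).
by rewrite map_conjgM conjgE mulgA mulgV mul1g; apply: hurwitz_refl.
Qed.

Definition splice s i b c := take i s ++ b :: c :: drop i.+2 s.

Lemma nth_splice s i b c j : i.+1 < size s ->
  nth 1 (splice s i b c) j = if j == i then b else if j == i.+1 then c else nth 1 s j.
Proof.
move=> lt_i; rewrite nth_cat size_take (ltnW lt_i).
case: ltnP => [lt_ji|le_ij]; first by rewrite nth_take // !ifN_eq //; lia.
have [->|ne_ji] := eqVneq j i; first by rewrite subnn.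
have [->|ne_ji1] := eqVneq j i.+1; first by rewrite subSnn.
by rewrite (_ : j - i = (j - i.+2).+2) /= ?nth_drop ?subnKC //; lia.
Qed.

Lemma size_splice s i b c : i.+1 < size s -> size (splice s i b c) = size s.
Proof. by move=> lt_i; rewrite size_cat /= size_take size_drop (ltnW lt_i); lia. Qed.

Lemma splice_nth s i : i.+1 < size s -> splice s i (nth 1 s i) (nth 1 s i.+1) = s.
Proof.
move=> lt_i; apply: (@eq_from_nth _ 1) => [|j _]; first exact: size_splice.
by rewrite nth_splice //; case: eqP => [->|_] //; case: eqP => [->|].
Qed.

Lemma hstepP s t : hstep s t <->
  exists2 i, i.+1 < size s & t = splice s i (nth 1 s i.+1) (nth 1 s i ^ nth 1 s i.+1).
Proof.
split=> [[p [a [b [q [-> ->]]]]]|[i lt_i ->]].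
  exists (size p); first by rewrite size_cat /=; lia.
  rewrite /splice take_size_cat // -addn2 addnC -drop_drop drop_size_cat // !nth_cat ltnn subnn.
  by rewrite (ltnNge (size p).+1) leqnSn /= subSnn drop0.
exists (take i s), (nth 1 s i), (nth 1 s i.+1), (drop i.+2 s).
by split; first rewrite -[LHS](splice_nth lt_i).
Qed.

Lemma hmove_hstep n (t u : n.-tuple gT) : hmove t u <-> hstep t u.
Proof.
rewrite hstepP size_tuple; split=> [/existsP[i /andP[lt_i /forallP u_eq]]|[i lt_i u_def]].
  exists i => //; apply: (@eq_from_nth _ 1) => [|j].
    by rewrite size_splice ?size_tuple.
  rewrite size_tuple => lt_j; rewrite nth_splice ?size_tuple //.
  move: (u_eq (Ordinal lt_j)); rewrite !(tnth_nth 1) /=.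
  by case: ifP => _; [move/eqP | case: ifP => _; move/eqP].
apply/existsP; exists (Ordinal (ltnW lt_i)); rewrite lt_i; apply/forallP => j /=.
rewrite !(tnth_nth 1) u_def nth_splice ?size_tuple //.
by case: (j == i :> nat); case: (j == i.+1 :> nat); rewrite /= eqxx.
Qed.

Lemma hequiv_sym n : connect_sym (fun s t : n.-tuple gT => hmove s t || hmove t s).
Proof. by apply: sym_connect_sym => x y; rewrite orbC. Qed.

Lemma hequiv_hurwitz n (t u : n.-tuple gT) : hequiv t u <-> hurwitz t u.
Proof.
split=> [/connectP[p]|].
  elim: p t => [|v p IH] t /=; first by move=> _ ->; apply: hurwitz_refl.
  case/andP=> /orP[/hmove_hstep|/hmove_hstep] step /IH{}IH /IH.
    exact: hurwitz_trans (hurwitz_step step).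
  exact: hurwitz_trans (hurwitz_sym (hurwitz_step step)).
suff hurwitz_hequiv s s' : hurwitz s s' ->
    forall t1 u1 : n.-tuple gT, tval t1 = s -> tval u1 = s' -> hequiv t1 u1.
  by move=> eq_tu; apply: hurwitz_hequiv eq_tu t u erefl erefl.
elim=> {s s'} [s|s s' step|s s' _ IH|s s' s'' eq_ss' IH1 _ IH2] t1 u1 def_s def_s'.
- by rewrite (val_inj (etrans def_s (esym def_s'))); apply: connect0.
- by apply: connect1; rewrite (_ : hmove t1 u1) //; apply/hmove_hstep; rewrite def_s def_s'.
- by rewrite /hequiv hequiv_sym; apply: IH.
- have size_s' : size s' == n by rewrite -(size_hurwitz eq_ss') -def_s size_tuple.
  exact: connect_trans (IH1 t1 (Tuple size_s') def_s erefl) (IH2 (Tuple size_s') u1 erefl def_s').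
Qed.

Lemma hequiv_class n (t u : n.-tuple gT) :
  hequiv t u -> [set w | hequiv t w] = [set w | hequiv u w].
Proof. by move=> tu; apply/setP => w; rewrite !inE /hequiv (same_connect (@hequiv_sym n) tu). Qed.

End HurwitzMoves.

Lemma count_mem_set (T : finType) (A : {set T}) (s : seq T) :
  count (mem A) s = \sum_(x in A) count_mem x s.
Proof.
elim: s => [|y s IH] /=; first by rewrite big1.
rewrite IH big_split /=; congr (_ + _).
have [yA|yA] := boolP (y \in A).
  rewrite (bigD1 y) //= eqxx big1 // => x /andP[_ ne_xy].
  by rewrite eq_sym (negbTE ne_xy).
by rewrite big1 // => x xA; case: eqP => // eq_yx; rewrite eq_yx xA in yA.
Qed.

Lemma pigeonhole_count (T : finType) (A : {set T}) (s : seq T) n :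
  #|A| * n < count (mem A) s -> exists2 x, x \in A & n < count_mem x s.
Proof.
move=> lt_n; apply/exists_inP; apply: contraLR lt_n => /exists_inPn small.
rewrite -leqNgt count_mem_set -sum_nat_const; apply: leq_sum => x /small.
by rewrite -leqNgt.
Qed.

Section ClassWords.
Local Open Scope group_scope.
Variables (gT : finGroupType) (G : {group gT}) (m : nat) (C : 'I_m -> {set gT}).
Hypothesis C_class : forall i, C i \in classes G.
Hypothesis C_inj : injective C.

Let O := \bigcup_(i < m) C i.

Lemma class_mem_subG i x : x \in C i -> x \in G.
Proof.
by have /imsetP[z zG ->] := C_class i; apply/subsetP; apply: class_subG.
Qed.

Lemma mem_class_conjg i x h : h \in G -> (x ^ h \in C i) = (x \in C i).
Proof.
by have /imsetP[z _ ->] := C_class i => hG; apply: memJ_norm; apply: subsetP (class_norm z G) h hG.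
Qed.

Lemma class_conj_witness i x y : x \in C i -> y \in C i -> exists2 h, h \in G & x ^ h = y.
Proof.
have /imsetP[z _ ->] := C_class i => /class_eqP xG; rewrite -xG => /imsetP[h hG ->].
by exists h.
Qed.

Lemma mem_classes_eq i j x : x \in C j -> (x \in C i) = (i == j).
Proof.
move=> xCj; apply/idP/eqP => [xCi|->//]; apply: C_inj.
have /imsetP[zi _ Ci] := C_class i; have /imsetP[zj _ Cj] := C_class j.
rewrite Ci Cj in xCi xCj *.
by rewrite -(class_eqP xCi) (class_eqP xCj).
Qed.

Lemma mem_O_conjg x h : h \in G -> (x ^ h \in O) = (x \in O).
Proof.
move=> hG; apply/bigcupP/bigcupP => -[i _ xCi]; exists i => //.
  by rewrite -(mem_class_conjg _ _ hG).
by rewrite mem_class_conjg.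
Qed.

Definition admissible (k : 'X_{1..m}) (s : seq gT) :=
  [&& all (fun g => g \in O) s,
      <<[set g in s]>> == G :> {set gT},
      wprod s == 1 &
      [forall i : 'I_m, count (fun g => g \in C i) s == k i]].

Lemma admissible_step k p a b q :
  admissible k (p ++ a :: b :: q) = admissible k (p ++ b :: a ^ b :: q).
Proof.
rewrite /admissible (wprod_hurwitz (hurwitz_swap p a b q)).
rewrite (gen_hurwitz (hurwitz_swap p a b q)) !all_cat /=.
have [bO|] := boolP (b \in O); last by rewrite !andbF.
have bG : b \in G by case/bigcupP: bO => i _; apply: class_mem_subG.
rewrite mem_O_conjg // !andTb; congr [&& _, _, _ & _]; apply: eq_forallb => i.
by rewrite !count_cat /= mem_class_conjg // [(a \in _) + _]addnCA.
Qed.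

Lemma admissible_hurwitz k s t : hurwitz s t -> admissible k s = admissible k t.
Proof. exact/hurwitz_invariant/admissible_step. Qed.

Lemma admissible_nseq_cat k j g s : g \in C j -> g \in s ->
  admissible (k + U_(j) *+ #|G|)%MM (nseq #|G| g ++ s) -> admissible k s.
Proof.
move=> gC gs; have set_eq : [set x in nseq #|G| g ++ s] = [set x in s].
  by apply/setP => x; rewrite !inE mem_cat mem_nseq; case: eqP => [->|]; rewrite ?gs ?andbF ?orbT.
case/and4P=> allO gen prod1 count_k; apply/and4P; split.
- by move: allO; rewrite all_cat => /andP[].
- by rewrite -set_eq.
- move: prod1; rewrite /wprod big_cat /= -/(wprod _) wprod_nseq.
  by rewrite expg_cardG ?mul1g // (class_mem_subG gC).
- apply/forallP => i; move/forallP/(_ i): count_k.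
  rewrite count_cat count_nseq mnmDE mulmnE mnm1E (mem_classes_eq i gC) (eq_sym j).
  by rewrite [k i + _]addnC eqn_add2l eq_sym.
Qed.

(* Pigeonhole gives a letter [g] of [C j] occurring more than [#|G|] times; collect [#|G|] copies
   of it in front and conjugate the whole word so that [g] becomes [g0]. *)
Lemma admissible_reduce (k : 'X_{1..m}) j g0 (s' : seq gT) : g0 \in C j -> #|G| * #|G| <= k j ->
    admissible (k + U_(j) *+ #|G|)%MM s' ->
  exists2 s, admissible k s & hurwitz s' (nseq #|G| g0 ++ s).
Proof.
set N := #|G|; move=> g0C le_k adm; have := adm => /and4P[_ /eqP gen /eqP prod1 /forallP count_k].
have [g gC lt_g] : exists2 g, g \in C j & N < count_mem g s'.
  apply: pigeonhole_count; move/eqP: (count_k j); rewrite mnmDE mulmnE mnm1E eqxx mul1n => ->.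
  have le_C : #|C j| <= N by apply/subset_leq_card/subsetP => x; apply: class_mem_subG.
  apply: leq_ltn_trans (leq_trans (leq_mul le_C (leqnn N)) le_k) _.
  by rewrite -{1}(addn0 (k j)) ltn_add2l cardG_gt0.
have [s1 coll] := hurwitz_collect lt_g.
rewrite -addn1 nseqD -catA /= in coll.
have [h hG gh] := class_conj_witness gC g0C.
have conj : hurwitz (nseq N g ++ g :: s1) (map (conjg^~ h) (nseq N g ++ g :: s1)).
  apply: hurwitz_conj; first by rewrite -(wprod_hurwitz coll).
  by rewrite -(gen_hurwitz coll) gen.
rewrite map_cat map_nseq gh in conj.
exists (map (conjg^~ h) (g :: s1)); last exact: hurwitz_trans coll conj.
apply: (admissible_nseq_cat g0C); first by rewrite /= gh mem_head.
by rewrite -(admissible_hurwitz _ (hurwitz_trans coll conj)).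
Qed.

Lemma hcount_shift (k : 'X_{1..m}) j g0 : g0 \in C j -> #|G| * #|G| <= k j ->
  hcount G C (k + U_(j) *+ #|G|)%MM <= hcount G C k.
Proof.
rewrite /hcount /=; set N := #|G|; set n := mdeg k; set n' := mdeg _ => g0C le_k.
have def_n' : n' = N + n by rewrite /n' mdegD mdegMn mdeg1 mul1n addnC.
pose pad (t : n.-tuple gT) : n'.-tuple gT := insubd (nseq_tuple n' g0) (nseq N g0 ++ t).
pose F (X : {set n.-tuple gT}) :=
  [set u | hequiv (pad (odflt (nseq_tuple n g0) [pick x in X])) u].
apply: leq_trans (leq_imset_card F _); apply/subset_leq_card/subsetP => _ /imsetP[t' t'_adm ->].
rewrite inE in t'_adm; have [s s_adm t's] := admissible_reduce g0C le_k t'_adm.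
have size_s : size s == n.
  by rewrite -(eqn_add2l N) -def_n' -(size_tuple t') (size_hurwitz t's) size_cat size_nseq.
pose t := Tuple size_s.
apply/imsetP; exists [set u | hequiv t u]; first by apply/imsetP; exists t; rewrite ?inE.
rewrite /F; case: pickP => [u|]; last by move/(_ t); rewrite inE /hequiv connect0.
rewrite inE => /hequiv_hurwitz tu; apply/hequiv_class/hequiv_hurwitz.
rewrite val_insubd size_cat size_nseq size_tuple -def_n' eqxx.
exact: hurwitz_trans t's (hurwitz_catl _ tu).
Qed.

End ClassWords.

Definition le_first (d : nat) (a b : nat -> nat) := forall i, i < d -> a i <= b i.

Definition downset (d : nat) (P : (nat -> nat) -> Prop) :=
  forall a b, le_first d a b -> P b -> P a.

Definition set_at (a : nat -> nat) (d y : nat) : nat -> nat :=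
  fun i => if i == d then y else a i.

Definition clip (L : nat) (a : nat -> nat) : nat -> nat := fun i => minn (a i) L.

Lemma le_first_eq d a b : (forall i, i < d -> a i = b i) -> le_first d a b.
Proof. by move=> eq_ab i /eq_ab ->. Qed.

Lemma downset_ext d P a b :
  downset d P -> (forall i, i < d -> a i = b i) -> P a <-> P b.
Proof.
by move=> dP eq_ab; split; apply: dP; apply: le_first_eq => i /eq_ab.
Qed.

Lemma le_first_set_at d a b y :
  le_first d a b -> le_first d.+1 (set_at a d y) (set_at b d y).
Proof.
move=> le_ab i; rewrite ltnS leq_eqVlt /set_at.
by case: eqP => //= _; apply: le_ab.
Qed.

Lemma le_first_set_at_r d a y y' :
  y <= y' -> le_first d.+1 (set_at a d y) (set_at a d y').
Proof. by move=> le_y i _; rewrite /set_at; case: eqP. Qed.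

Lemma set_at_id d (a : nat -> nat) i : set_at a d (a d) i = a i.
Proof. by rewrite /set_at; case: eqP => [->|]. Qed.

Lemma uniform_bound (Y : nat) (Q : nat -> nat -> Prop) :
    (forall y, y <= Y -> exists N, forall n, N <= n -> Q y n) ->
  exists N, forall y n, y <= Y -> N <= n -> Q y n.
Proof.
elim: Y => [|Y IH] HQ.
  have [N HN] := HQ 0 (leqnn 0).
  by exists N => y n; rewrite leqn0 => /eqP ->; apply: HN.
have [N1 HN1] := IH (fun y hy => HQ y (leqW hy)).
have [N2 HN2] := HQ Y.+1 (leqnn _).
exists (maxn N1 N2) => y n; rewrite leq_eqVlt geq_max => /orP[/eqP->|hy] /andP[h1 h2].
  exact: HN2.
exact: HN1.
Qed.

Lemma decreasing_chain_le (D : nat -> (nat -> nat) -> Prop) n n' a :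
  (forall n a, D n.+1 a -> D n a) -> n <= n' -> D n' a -> D n a.
Proof.
move=> Ddec /subnK <-; elim: (n' - n) => // k IH.
by rewrite addSn => /Ddec.
Qed.

(* Dickson's lemma, as the descending chain condition for downsets of N^d. *)
Lemma downset_chain_stable d (D : nat -> (nat -> nat) -> Prop) :
    (forall n, downset d (D n)) -> (forall n a, D n.+1 a -> D n a) ->
  exists n0, forall n a, n0 <= n -> D n a -> forall n', D n' a.
Proof.
elim: d D => [|d IH] D Dd Ddec.
  have Dconst n a : D n a <-> D n (fun _ => 0) by apply: downset_ext.
  case: (classic (forall n, D n (fun _ => 0))) => [Dall|/not_all_ex_not[n0 Dn0]].
    by exists 0 => n a _ _ n'; apply/Dconst.
  exists n0 => n a le_n /(decreasing_chain_le Ddec le_n) /Dconst //.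
pose S n y x := D n (set_at x d y).
have Sd n y : downset d (S n y).
  by move=> a b le_ab; apply: Dd; apply: le_first_set_at.
have Sy n y y' x : y <= y' -> S n y' x -> S n y x.
  by move=> le_y; apply: Dd; apply: le_first_set_at_r.
pose E y x := forall n, S n y x.
have [ys Hys] : exists ys, forall y x, ys <= y -> E y x -> forall y', E y' x.
  apply: IH => [y a b le_ab Eb n|y x Ey n]; first exact: Sd le_ab (Eb n).
  exact: Sy (leqnSn y) (Ey n).
have [N0 HN0] : exists N0, forall y n, y <= ys -> N0 <= n -> forall x, S n y x -> E y x.
  apply: uniform_bound => y _.
  have [ny Hny] := IH (S^~ y) (Sd^~ y) (fun n x => Ddec n (set_at x d y)).
  by exists ny => n le_n x /(Hny n x le_n).
have DS n a : D n a <-> S n (a d) a by apply: downset_ext => // i _; rewrite set_at_id.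
exists N0 => n a le_n /DS Sa n'; apply/DS.
case: (leqP (a d) ys) => hd; first exact: (HN0 _ _ hd le_n _ Sa).
have Eys : E ys a by apply: (HN0 _ _ (leqnn _) le_n _ (Sy n ys _ a (ltnW hd) Sa)).
exact: Hys ys a (leqnn _) Eys (a d) n'.
Qed.

Lemma downset_clip d P : downset d P ->
  exists L, forall L', L <= L' -> forall a, P a <-> P (clip L' a).
Proof.
elim: d P => [|d IH] P dP.
  by exists 0 => L' _ a; apply: (downset_ext dP).
pose S y x := P (set_at x d y).
have Sd y : downset d (S y).
  by move=> a b le_ab; apply: dP; apply: le_first_set_at.
have Sy y y' x : y <= y' -> S y' x -> S y x.
  by move=> le_y; apply: dP; apply: le_first_set_at_r.
have [y0 Hy0] := downset_chain_stable Sd (fun y x => Sy y y.+1 x (leqnSn y)).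
have Sy0 y x : y0 <= y -> S y x <-> S y0 x.
  by move=> le_y; split => [|/Hy0]; [apply: Sy | apply].
have [L1 HL1] : exists L1, forall y L', y <= y0 -> L1 <= L' -> forall x, S y x <-> S y (clip L' x).
  by apply: uniform_bound => y _; apply: IH.
exists (maxn L1 y0) => L'; rewrite geq_max => /andP[le_L1 le_y0] a.
have PS b : P b <-> S (b d) b by apply: (downset_ext dP) => // i _; rewrite set_at_id.
rewrite PS [P (clip _ _)]PS.
case: (leqP (a d) y0) => hd.
  have -> : clip L' a d = a d by apply/minn_idPl; apply: leq_trans le_y0.
  exact: HL1.
rewrite Sy0 ?(ltnW hd) // Sy0; last by rewrite leq_min (ltnW hd).
exact: HL1.
Qed.

Definition antitone_first d (g : (nat -> nat) -> nat) :=
  forall a b, le_first d a b -> g b <= g a.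

Lemma antitone_clip d g : antitone_first d g ->
  exists L, forall L', L <= L' -> forall a, g (clip L' a) = g a.
Proof.
move=> gA; pose M := g (fun _ => 0).
have le_M a : g a <= M by apply: gA.
have [L HL] : exists L, forall c L', c <= M -> L <= L' -> forall a, c <= g a <-> c <= g (clip L' a).
  apply: uniform_bound => c _; apply: (@downset_clip d) => a b le_ab.
  by move=> le_cb; apply: leq_trans le_cb (gA _ _ le_ab).
exists L => L' le_L a; apply/eqP; rewrite eqn_leq.
by apply/andP; split; [apply/(HL _ _ (le_M (clip L' a)) le_L a) | apply/(HL _ _ (le_M a) le_L a)].
Qed.

Section EventualPeriodicity.
Variables (m : nat) (h : 'X_{1..m} -> nat) (N B : nat).
Hypothesis N_gt0 : 0 < N.
Hypothesis h_shift :
  forall (k : 'X_{1..m}) j, B <= k j -> h (k + U_(j) *+ N)%MM <= h k.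

Lemma mulmDn (d1 d2 : 'X_{1..m}) n : ((d1 + d2) *+ n = d1 *+ n + d2 *+ n)%MM.
Proof. by apply/mnmP => i; rewrite !(mulmnE, mnmDE) mulnDl. Qed.

Lemma h_shift_multi (k d : 'X_{1..m}) :
  (forall i, d i != 0 -> B <= k i) -> h (k + d *+ N)%MM <= h k.
Proof.
elim: {d}(mdeg d) {-2}d (erefl (mdeg d)) => [|n IH] d deg_d hd.
  move: deg_d => /eqP; rewrite mdeg_eq0 => /eqP ->.
  have -> : (0 *+ N)%MM = 0%MM :> 'X_{1..m} by apply/mnmP => i; rewrite mulmnE mnm0E.
  by rewrite addm0.
have [i di] : exists i, d i != 0.
  case: (pickP (fun i => d i != 0)) => [i di|d0]; first by exists i.
  suff: mdeg d = 0 by rewrite deg_d.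
  by rewrite mdegE big1 // => i _; apply/eqP; move/negbT: (d0 i); rewrite negbK.
have Ud : (U_(i) <= d)%MM by rewrite lep1mP.
rewrite -(submK Ud) mulmDn addmA.
apply: (@leq_trans (h (k + (d - U_(i)) *+ N)%MM)); first apply: h_shift.
  by rewrite mnmDE; apply: leq_trans (leq_addr _ _); apply: hd.
apply: IH => [|j].
  by move: deg_d; rewrite -{1}(submK Ud) mdegD mdeg1 addn1 => -[].
rewrite mnmBE mnm1E; have [<- _|_] := eqVneq i j; first exact: hd.
by rewrite subn0 => /hd.
Qed.

Definition pattern := {ffun 'I_m -> 'I_(B + N)}.

Definition lift_pattern (p : pattern) (a : nat -> nat) : 'X_{1..m} :=
  [multinom (if p i < B then p i : nat else p i + a i * N) | i < m].

Lemma lift_pattern_shift p a b : le_first m a b ->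
  lift_pattern p b =
  (lift_pattern p a + [multinom (if p i < B then 0 else b i - a i) | i < m] *+ N)%MM.
Proof.
move=> le_ab; apply/mnmP => i; rewrite !(mnmE, mnmDE, mulmnE).
by case: ifP => _; rewrite ?mul0n ?addn0 // -addnA -mulnDl subnKC ?le_ab.
Qed.

Lemma lift_pattern_antitone p : antitone_first m (fun a => h (lift_pattern p a)).
Proof.
move=> a b le_ab; rewrite (lift_pattern_shift p le_ab) h_shift_multi // => i.
by rewrite !mnmE; case: ifP => // /negbT; rewrite -leqNgt => /leq_trans-> //; apply: leq_addr.
Qed.

Lemma pattern_lt (k : 'X_{1..m}) i : (if k i < B then k i else B + (k i - B) %% N) < B + N.
Proof. by case: (ltnP (k i) B) => hk; [exact: ltn_addr | rewrite ltn_add2l ltn_pmod]. Qed.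

Definition pattern_of (k : 'X_{1..m}) : pattern := [ffun i => Ordinal (pattern_lt k i)].

(* Truncated subtraction makes the digit of a frozen coordinate [0]. *)
Definition digits_of (k : 'X_{1..m}) (i : nat) := (nth 0 k i - B) %/ N.

Lemma lift_pattern_of k : lift_pattern (pattern_of k) (digits_of k) = k.
Proof.
apply/mnmP => i; rewrite mnmE ffunE /= /digits_of -mnm_nth.
case: (ltnP (k i) B) => [->//|le_B].
by rewrite ltnNge leq_addr /= -addnA [_ %% _ + _]addnC -divn_eq subnKC.
Qed.

Lemma eventually_periodic :
  exists L, forall (k : 'X_{1..m}) j, L <= k j -> h (k + U_(j) *+ N)%MM = h k.
Proof.
have [Lp HLp] := fin_all_exists (fun p : pattern => antitone_clip (lift_pattern_antitone p)).
pose L := \max_(p : pattern) Lp p.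
exists (B + L * N) => k j le_k.
set p := pattern_of k; set a := digits_of k; pose b := set_at a j (a j).+1.
have le_B : B <= k j by apply: leq_trans le_k; apply: leq_addr.
have le_L : L <= a j by rewrite /a /digits_of -mnm_nth leq_divRL // leq_subRL.
have le_ab : le_first m a b by move=> i _; rewrite /b /set_at; case: eqP => // ->.
have -> : (k + U_(j) *+ N)%MM = lift_pattern p b.
  rewrite (lift_pattern_shift p le_ab) lift_pattern_of; congr (_ + _ *+ _)%MM.
  apply/mnmP => i; rewrite !mnmE ffunE /= /b /set_at.
  have [<-|ne_ji] := eqVneq j i.
    by rewrite eqxx (ltnNge (k j)) le_B /= ltnNge leq_addr subSnn.
  have -> : (i == j :> nat) = false by apply/negbTE; rewrite eq_sym.
  by rewrite subnn; case: ifP.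
rewrite -[in RHS](lift_pattern_of k) -/p -/a.
rewrite -(HLp p L (leq_bigmax p)) -[in RHS](HLp p L (leq_bigmax p)); congr h.
apply/mnmP => i; rewrite !mnmE /clip /b /set_at; case: eqP => // ->.
by rewrite !(minn_idPr _) // (leq_trans le_L).
Qed.

End EventualPeriodicity.

Import GRing.Theory Num.Theory.
Local Open Scope ring_scope.

Section SumOfMonomials.
Variables (R : ringType) (m : nat) (I : finType) (c : I -> R) (e : I -> 'X_{1..m}).

Lemma mcoeff_sum_monomials x :
  (\sum_i c i *: 'X_[e i] : {mpoly R[m]})@_x = \sum_i c i * (e i == x)%:R.
Proof.
rewrite (big_morph (mcoeff x) (mcoeffD x) (mcoeff0 _ x)); apply: eq_bigr => i _.
by rewrite mcoeffZ mcoeffX.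
Qed.

Lemma sum_msupp_monomials (f : 'X_{1..m} -> R) : injective e ->
  let P : {mpoly R[m]} := \sum_i c i *: 'X_[e i] in
  \sum_(x <- msupp P) P@_x * f x = \sum_i c i * f (e i).
Proof.
move=> inj_e P.
have cP i : P@_(e i) = c i.
  rewrite mcoeff_sum_monomials (bigD1 i) //= eqxx mulr1 big1 ?addr0 // => j ne_ji.
  by rewrite (inj_eq inj_e) (negbTE ne_ji) mulr0.
under eq_bigr => x _ do rewrite mcoeff_sum_monomials big_distrl /=.
rewrite exchange_big /=; apply: eq_bigr => i _.
have [supp_i|] := boolP (e i \in msupp P).
  rewrite (bigD1_seq (e i)) ?msupp_uniq //= eqxx mulr1 big1 ?addr0 // => x ne_x.
  by rewrite eq_sym (negbTE ne_x) mulr0 mul0r.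
rewrite mcoeff_msupp negbK cP => /eqP c0; rewrite c0 mul0r big1_seq // => x _.
by rewrite !mul0r.
Qed.

End SumOfMonomials.

Section RationalOfPeriodic.
Variables (m : nat) (F : 'X_{1..m} -> rat) (N L : nat).
Hypothesis N_gt0 : (0 < N)%N.
Hypothesis F_periodic :
  forall (k : 'X_{1..m}) j, (L <= k j)%N -> F (k + U_(j) *+ N)%MM = F k.

Definition face_exp (S : {set 'I_m}) : 'X_{1..m} :=
  [multinom (if i \in S then N else 0%N) | i < m].

Lemma face_exp_inj : injective face_exp.
Proof.
move=> S S' eq_SS'; apply/setP => i; move/mnmP/(_ i): eq_SS'; rewrite !mnmE.
by case: (i \in S); case: (i \in S') => // /eqP; rewrite ?(gtn_eqF N_gt0) // eq_sym (gtn_eqF N_gt0).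
Qed.

(* The expansion of the product of the [1 - t_i ^ N]. *)
Definition period_denom : {mpoly rat[m]} := \sum_(S : {set 'I_m}) (-1) ^+ #|S| *: 'X_[face_exp S].

Lemma period_denom_neq0 : period_denom != 0.
Proof.
apply/eqP => /(congr1 (mcoeff (face_exp set0))).
rewrite mcoeff0 mcoeff_sum_monomials (bigD1 set0) //= eqxx mulr1 big1 ?addr0.
  by rewrite cards0 expr0 => /eqP; rewrite oner_eq0.
by move=> S nS0; rewrite (inj_eq face_exp_inj) (negbTE nS0) mulr0.
Qed.

Definition denom_term (k : 'X_{1..m}) (S : {set 'I_m}) : rat :=
  (-1) ^+ #|S| * (if (face_exp S <= k)%MM then F (k - face_exp S)%MM else 0).

Lemma coef_denom_mul (k : 'X_{1..m}) :
  \sum_(e <- msupp period_denom | (e <= k)%MM) period_denom@_e * F (k - e)%MM =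
  \sum_(S : {set 'I_m}) denom_term k S.
Proof.
pose Fk e := if (e <= k)%MM then F (k - e)%MM else 0.
rewrite big_mkcond /= -(sum_msupp_monomials _ Fk face_exp_inj).
by apply: eq_bigr => e _; rewrite /Fk; case: ifP; rewrite ?mulr0.
Qed.

Lemma denom_term_setU1 (k : 'X_{1..m}) j (S : {set 'I_m}) : (L + N <= k j)%N -> j \notin S ->
  denom_term k (j |: S) = - denom_term k S.
Proof.
move=> le_k jS; have le_N : (N <= k j)%N := leq_trans (leq_addl L N) le_k.
rewrite /denom_term cardsU1 jS add1n exprS mulN1r -mulNr; congr (_ * _).
have inS (i : 'I_m) : i != j -> (i \in j |: S) = (i \in S) by move/negbTE; rewrite in_setU1 => ->.
have -> : (face_exp (j |: S) <= k)%MM = (face_exp S <= k)%MM.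
  apply/mnm_lepP/mnm_lepP => le_e i; have := le_e i; rewrite !mnmE.
    by have [->|/inS->//] := eqVneq i j; rewrite (negbTE jS).
  by have [->|/inS->//] := eqVneq i j; rewrite setU11.
case: ifP => // _.
rewrite -(@F_periodic (k - face_exp (j |: S))%MM j); last first.
  by rewrite mnmBE mnmE setU11 leq_subRL // addnC.
congr F; apply/mnmP => i; rewrite !(mnmDE, mnmBE, mulmnE, mnm1E, mnmE).
have [->|ne_ij] := eqVneq i j; first by rewrite setU11 (negbTE jS) mul1n subn0 subnK.
by rewrite inS // mul0n addn0.
Qed.

Lemma sum_denom_term_eq0 (k : 'X_{1..m}) j :
  (L + N <= k j)%N -> \sum_(S : {set 'I_m}) denom_term k S = 0.
Proof.
move=> le_k; pose toggle (S : {set 'I_m}) := if j \in S then S :\ j else j |: S.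
have toggleK : involutive toggle.
  move=> S; rewrite /toggle.
  by case: (boolP (j \in S)) => jS; rewrite ?setD11 ?setD1K ?setU11 ?setU1K.
have toggle_term S : denom_term k (toggle S) = - denom_term k S.
  rewrite /toggle; case: (boolP (j \in S)) => jS; last exact: denom_term_setU1.
  by rewrite -{2}(setD1K jS) denom_term_setU1 ?setD11 // opprK.
have : \sum_S denom_term k S = - \sum_S denom_term k S.
  rewrite {1}(reindex_inj (inv_inj toggleK)) -sumrN; apply: eq_bigr => S _; exact: toggle_term.
by move/eqP; rewrite -addr_eq0 -mulr2n mulrn_eq0 => /eqP.
Qed.

Lemma rational_of_periodic : rational_series F.
Proof.
pose D := (m * (L + N)).+1.
pose P : {mpoly rat[m]} :=
  \sum_(b : 'X_{1..m < D}) (\sum_(S : {set 'I_m}) denom_term b S) *: 'X_[b].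
exists P, period_denom; split=> [|k]; first exact: period_denom_neq0.
rewrite coef_denom_mul mcoeff_sum_monomials; case: (ltnP (mdeg k) D) => le_D.
  rewrite (bigD1 (BMultinom le_D)) //= eqxx mulr1 [X in _ + X]big1 ?addr0 // => b ne_b.
  by case: eqP => [eq_bk|]; [move: ne_b; rewrite -(inj_eq val_inj) /= eq_bk eqxx | rewrite mulr0].
rewrite [RHS]big1 => [|b _]; last first.
  by case: eqP => [eq_bk|]; [have := bmdeg b; rewrite eq_bk ltnNge le_D | rewrite mulr0].
have [j le_k] : exists j, (L + N <= k j)%N.
  apply/existsP; apply: contraLR le_D; rewrite negb_exists -ltnNge ltnS => /forallP small.
  apply: (@leq_trans (\sum_(i < m) (L + N))); last by rewrite sum_nat_const card_ord.
  by rewrite mdegE; apply: leq_sum => i _; rewrite ltnW // ltnNge small.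
exact: sum_denom_term_eq0 le_k.
Qed.

End RationalOfPeriodic.

Theorem theorem4p6 (gT : finGroupType) (G : {group gT}) (m : nat)
    (C : 'I_m -> {set gT})
    (hC : forall i, C i \in classes G)
    (hdisj : injective C)
    (hnt : forall i, C i != [set 1%g])
    (hgen : forall i, <<C i>>%g = G) :
  rational_series (fun k => ((hcount G C k)%:R)%R).
Proof.
have shift (k : 'X_{1..m}) j : (#|G| * #|G| <= k j)%N ->
    (hcount G C (k + U_(j) *+ #|G|)%MM <= hcount G C k)%N.
  by apply: (hcount_shift hC hdisj); apply: mem_repr_classes.
have [L h_periodic] := eventually_periodic (cardG_gt0 G) shift.
apply: (@rational_of_periodic _ _ #|G| L (cardG_gt0 G)) => k j le_L.
by rewrite h_periodic.
Qed.
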